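(* Consider the scalar Gaussian wiretap channel with amplitude constraint $\mathsf{R}>0$ and $0<\sigma_1^2<\sigma_2^2$, let $X^\star$ be a secrecy-capacity-achieving input, and let $\breve{h}:\mathbb{C}\to\mathbb{C}$ be the complex extension (defined in the context) of the function $h(y)=\sigma_1^2 f_{Y_1}(y)g'(y)$. Then for every \[ \mathsf{B} \ge \mathsf{R} \frac{\sigma_2^2+\sigma_1^2}{ \sigma_2^2-\sigma_1^2}, \] we have \[ \max_{|z|\le \mathsf{B}} |\breve{h}(z)| \ge \left( c_1 \mathsf{B} - c_2 \mathsf{R} \right) \frac{ \exp\left( -\frac{(\mathsf{B}+\mathsf{R})^2}{2\sigma_1^2} \right) }{\sqrt{2\pi \sigma_1^2}} , \] where $c_1=1-\frac{\sigma_1^2 }{\sigma_2^2}$ and $c_2=1 + \frac{\sigma_1^2 }{\sigma_2^2}$.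
   Context: Scalar Gaussian wiretap channel: $Y_i=X+N_i$, $N_i\sim\mathcal{N}(0,\sigma_i^2)$, $i=1,2$, mutually independent with $X$. $C_s(\sigma_1^2,\sigma_2^2,\mathsf{R},1)=\max I(X;Y_1)-I(X;Y_2)$ over distributions of $X$ on $[-\mathsf{R},\mathsf{R}]$; $X^\star$ is a maximizer. $\phi_\sigma(w)=\frac{1}{\sqrt{2\pi\sigma^2}}e^{-w^2/(2\sigma^2)}$, and $f_{Y_i}(w)=\mathbb{E}[\phi_{\sigma_i}(w-X^\star)]$. $N\sim\mathcal{N}(0,\sigma_2^2-\sigma_1^2)$ independent of $X^\star$. $g(y)=\mathbb{E}\left[\log\frac{f_{Y_2}(y+N)}{f_{Y_1}(y)}\right]$ and $h(y)=\sigma_1^2 f_{Y_1}(y)g'(y)$, which equals $\sigma_1^2 f_{Y_1}(y)\left(\frac{\mathbb{E}_N[\mathbb{E}[X^\star|Y_2=y+N]]-y}{\sigma_2^2}-\frac{\mathbb{E}[X^\star|Y_1=y]-y}{\sigma_1^2}\right)$ and also $\frac{\sigma_1^2 f_{Y_1}(y)\mathbb{E}[N\log f_{Y_2}(y+N)]}{\sigma_2^2-\sigma_1^2}-\mathbb{E}[X^\star\phi_{\sigma_1}(y-X^\star)]+y f_{Y_1}(y)$. The complex extension $\breve{h}(z)$ is obtained by replacing $y$ by $z\in\mathbb{C}$ in this last expression, with $\phi_\sigma$ and $f_{Y_i}$ extended to complex arguments by the same formulas and $\log$ the principal branch. *)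

From mathcomp Require Import all_boot all_order all_algebra.
From mathcomp Require Import all_classical all_reals all_analysis.
From mathcomp Require Import complex.
Import Order.TTheory GRing.Theory Num.Theory.
Set Implicit Arguments. Unset Strict Implicit. Unset Printing Implicit Defensive.
Local Open Scope ring_scope.
Local Open Scope complex_scope.

Section WiretapDefs.
Variable R : realType.

Definition cabs (z : R[i]) : R := Num.sqrt (complex.Re z ^+ 2 + complex.Im z ^+ 2).

(* Gaussian density with variance v : phi_sigma, sigma^2 = v *)
Definition phi (v : R) (w : R) : R :=
  expR (- (w ^+ 2) / (2 * v)) / Num.sqrt (2 * pi * v).

Definition fY (mu : probability R R) (v : R) (y : R) : R :=
  \int[mu]_x phi v (y - x).

Definition MI (mu : probability R R) (v : R) : R :=
  \int[mu]_x (\int[lebesgue_measure]_y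
                 (phi v (y - x) * ln (phi v (y - x) / fY mu v y))).

Definition supported (mu : probability R R) (Rr : R) : Prop :=
  mu `[- Rr, Rr]%classic = 1%E.

Definition secrecy_obj (mu : probability R R) (v1 v2 : R) : R :=
  MI mu v1 - MI mu v2.

Definition secrecy_maximizer (mu : probability R R) (v1 v2 Rr : R) : Prop :=
  supported mu Rr /\
  forall nu : probability R R, supported nu Rr ->
    secrecy_obj nu v1 v2 <= secrecy_obj mu v1 v2.

Definition expC (z : R[i]) : R[i] :=
  (expR (complex.Re z) * cos (complex.Im z)) +i* (expR (complex.Re z) * sin (complex.Im z)).

(* principal argument in (-pi, pi]; Arg 0 := 0 (convention) *)
Definition ArgC (w : R[i]) : R :=
  if (complex.Re w == 0) && (complex.Im w == 0) then 0
  else if 0 <= complex.Im w then acos (complex.Re w / cabs w)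
  else - acos (complex.Re w / cabs w).

(* principal branch of the logarithm (Log 0 := 0 by convention) *)
Definition LogC (w : R[i]) : R[i] := (ln (cabs w)) +i* (ArgC w).

Definition phiC (v : R) (w : R[i]) : R[i] :=
  expC (- (w * w) / (2 * v)%:C) / (Num.sqrt (2 * pi * v))%:C.

Definition EC (mu : probability R R) (F : R -> R[i]) : R[i] :=
  (\int[mu]_x complex.Re (F x)) +i* (\int[mu]_x complex.Im (F x)).

Definition fYC (mu : probability R R) (v : R) (z : R[i]) : R[i] :=
  EC mu (fun x => phiC v (z - x%:C)).

Definition EN (v : R) (G : R -> R[i]) : R[i] :=
  (\int[lebesgue_measure]_n (complex.Re (G n) * phi v n))
  +i* (\int[lebesgue_measure]_n (complex.Im (G n) * phi v n)).

(* complex extension breve h of h = sigma1^2 f_{Y1} g' :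
   sigma1^2 f_{Y1}(z) E[N log f_{Y2}(z+N)] / (sigma2^2 - sigma1^2)
   - E[Xs phi_{sigma1}(z - Xs)] + z f_{Y1}(z),   N ~ N(0, sigma2^2 - sigma1^2) *)
Definition hC (mu : probability R R) (v1 v2 : R) (z : R[i]) : R[i] :=
  v1%:C * fYC mu v1 z * EN (v2 - v1) (fun n => n%:C * LogC (fYC mu v2 (z + n%:C)))
    / (v2 - v1)%:C
  - EC mu (fun x => x%:C * phiC v1 (z - x%:C))
  + z * fYC mu v1 z.

End WiretapDefs.

From mathcomp Require Import all_boot all_order all_algebra.
From mathcomp Require Import all_classical all_reals all_analysis.
From mathcomp Require Import complex.
From mathcomp Require Import ring lra measurable_realfun.
Import Order.TTheory GRing.Theory Num.Theory.
Import numFieldNormedType.Exports.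
Set Implicit Arguments. Unset Strict Implicit. Unset Printing Implicit Defensive.
Local Open Scope classical_set_scope.
Local Open Scope ring_scope.

(* The witness is the real point z = B, where hC is real:
   hC(B) = f1 (B + v1 J / (v2 - v1)) - E[X phi_1(B - X)] with f1 = f_Y1(B) and
   J = E[N log f_Y2(B + N)].  As |X| <= R, f1 >= phi_1(B + R) and
   E[X phi_1(B - X)] <= R f1.  Moreover log f_Y2(w) + (w + R)^2 / (2 v2) is
   nondecreasing in w, so pairing N with -N and using E[N^2] = v2 - v1 gives
   J >= -(B + R)(v2 - v1) / v2.  Hence hC(B) >= f1 ((1 - v1/v2) B - (1 + v1/v2) R),
   and the bracket is nonnegative by the assumption on B. *)

Section gaussian_density.
Context {R : realType}.
Implicit Types v w x y : R.

Lemma phi_ge0 v w : 0 <= phi v w.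
Proof. by rewrite /phi divr_ge0 ?expR_ge0 ?sqrtr_ge0. Qed.

Lemma phi_gt0 v w : 0 < v -> 0 < phi v w.
Proof.
by move=> v0; rewrite /phi divr_gt0 ?expR_gt0// sqrtr_gt0 !mulr_gt0 ?pi_gt0.
Qed.

Lemma phiN v w : phi v (- w) = phi v w.
Proof. by rewrite /phi sqrrN. Qed.

Lemma phi_le_of_sqr_le v x y : 0 < v -> x ^+ 2 <= y ^+ 2 -> phi v y <= phi v x.
Proof.
move=> v0 xy; rewrite /phi ler_wpM2r ?invr_ge0 ?sqrtr_ge0// ler_expR.
by rewrite !mulNr lerN2 ler_pM2r// invr_gt0 mulr_gt0.
Qed.

Lemma phi_le_peak v w : 0 < v -> phi v w <= (Num.sqrt (2 * pi * v))^-1.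
Proof.
move=> v0; rewrite /phi ler_pdivrMr ?sqrtr_gt0 ?mulr_gt0 ?pi_gt0//.
rewrite mulVf ?gt_eqF ?sqrtr_gt0 ?mulr_gt0 ?pi_gt0// -expR0 ler_expR.
by rewrite mulNr oppr_le0 mulr_ge0 ?sqr_ge0// invr_ge0 mulr_ge0// ltW.
Qed.

Lemma continuous_phi v : continuous (phi v).
Proof.
move=> x; rewrite /phi; apply: cvgM; last exact: cvg_cst.
apply: (cvg_comp _ expR); last exact: continuous_expR.
apply: cvgM; last exact: cvg_cst.
apply: (@cvgN _ R^o); exact: exprn_continuous.
Qed.

Lemma measurable_phi v : measurable_fun setT (phi v).
Proof.
apply: measurable_funM => //=; apply: measurableT_comp => //=.
by apply: measurable_funM => //=; apply: measurableT_comp => //=; exact: measurable_funX.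
Qed.

Lemma measurable_sqr_mul_phi v : measurable_fun setT (fun x : R => x ^+ 2 * phi v x).
Proof. by apply: measurable_funM; [exact: measurable_funX | exact: measurable_phi]. Qed.

Lemma is_derive_phi v x : 0 < v -> is_derive x 1 (phi v) (- x / v * phi v x).
Proof.
move=> v0.
have -> : phi v = (expR \o ((- (2 * v)^-1) *: id ^+ 2)) * cst (Num.sqrt (2 * pi * v))^-1.
  apply/funext => y; rewrite /phi /= !fctE; congr (expR _ / _).
  by rewrite /GRing.scale /= !mulNr mulrC.
apply: is_derive_eq; rewrite /= !fctE /= scaler0 add0r expr1.
rewrite /GRing.scale /= mulr1 mulrC.
by field; rewrite !gt_eqF ?sqrtr_gt0 ?mulr_gt0 ?pi_gt0.
Qed.

End gaussian_density.

Section supported_integration.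
Context {R : realType} (mu : probability R R) (Rr : R).
Hypothesis supp : supported mu Rr.
Local Notation D := (`[- Rr, Rr]%classic : set R).

Lemma supported_norm_le x : D x -> `|x| <= Rr.
Proof. by rewrite /= in_itv/= ler_norml. Qed.

Lemma supported_setC_null : mu (~` D) = 0%E.
Proof. by rewrite probability_setC// supp subee. Qed.

Lemma integral_supported (f : R -> R) : measurable_fun setT f ->
  (\int[mu]_x (f x)%:E = \int[mu]_(x in D) (f x)%:E)%E.
Proof.
move=> mf; have mD : measurable D by [].
have mDC : measurable (~` D) by exact: measurableC.
rewrite -[in LHS](setUv D) integral_setU//; last 2 first.
- by rewrite setUv; exact/measurable_EFinP.
- exact/disj_setPCl.
rewrite [X in (_ + X)%E]null_set_integral ?adde0//.
- exact/measurable_EFinP/measurable_funTS.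
- exact: supported_setC_null.
Qed.

Lemma Rintegral_supported (f : R -> R) : measurable_fun setT f ->
  \int[mu]_x f x = \int[mu]_(x in D) f x.
Proof. by move=> mf; rewrite /Rintegral integral_supported. Qed.

Lemma integrable_supported (f : R -> R) (M : R) : measurable_fun setT f ->
  (forall x, D x -> `|f x| <= M) -> mu.-integrable D (EFin \o f).
Proof.
move=> mf fM; apply: measurable_bounded_integrable => //.
- exact: le_lt_trans (probability_le1 _ _) (ltry _).
- exact: measurable_funTS.
- exists M; split; first exact: num_real.
  by move=> M' MM' x Dx /=; exact: le_trans (fM x Dx) (ltW MM').
Qed.

Lemma le_Rintegral_supported (f g : R -> R) (Mf Mg : R) :
  measurable_fun setT f -> measurable_fun setT g ->
  (forall x, D x -> `|f x| <= Mf) -> (forall x, D x -> `|g x| <= Mg) ->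
  (forall x, D x -> f x <= g x) ->
  \int[mu]_x f x <= \int[mu]_x g x.
Proof.
move=> mf mg fM gM fg; rewrite !Rintegral_supported//.
by apply: le_Rintegral => //; [exact: integrable_supported fM|exact: integrable_supported gM].
Qed.

End supported_integration.

Section output_density.
Context {R : realType} (mu : probability R R) (Rr : R).
Hypothesis supp : supported mu Rr.

Lemma measurable_phi_sub v w : measurable_fun setT (fun x : R => phi v (w - x)).
Proof. exact: measurableT_comp (measurable_phi v) (measurable_funB _ _). Qed.

Lemma fY_ge_phi v w : 0 < v -> phi v (`|w| + Rr) <= fY mu v w.
Proof.
move=> v0; set c := phi v _.
have -> : c = \int[mu]_x cst c x.
  rewrite Rintegral_cst// -[LHS]mulr1; congr (_ * _).
  exact: (esym (congr1 fine (probability_setT mu))).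
apply: (le_Rintegral_supported supp (Mf := `|c|) (Mg := (Num.sqrt (2 * pi * v))^-1)).
- exact: measurable_cst.
- exact: measurable_phi_sub.
- by [].
- by move=> x _; rewrite ger0_norm ?phi_ge0// phi_le_peak.
move=> x /supported_norm_le xR; apply: phi_le_of_sqr_le => //.
have wx : `|w - x| <= `|w| + Rr by rewrite (le_trans (ler_normB _ _))// lerD2l.
rewrite -real_normK ?num_real//.
by rewrite lerXn2r ?nnegrE// (le_trans _ wx).
Qed.

Lemma fY_gt0 v w : 0 < v -> 0 < fY mu v w.
Proof. by move=> v0; exact: lt_le_trans (phi_gt0 _ v0) (fY_ge_phi w v0). Qed.

Lemma Rintegral_mul_phi_le v w : 0 < v ->
  \int[mu]_x (x * phi v (w - x)) <= Rr * fY mu v w.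
Proof.
move=> v0; set U := (Num.sqrt (2 * pi * v))^-1.
have phiU x : `|phi v (w - x)| <= U by rewrite ger0_norm ?phi_ge0 ?phi_le_peak.
have -> : Rr * fY mu v w = \int[mu]_x (Rr * phi v (w - x)).
  rewrite /fY !(Rintegral_supported supp) ?RintegralZl//.
  - exact: integrable_supported (measurable_phi_sub _ _) (fun x _ => phiU x).
  - exact: measurable_funM (measurable_phi_sub _ _).
  - exact: measurable_phi_sub.
apply: (le_Rintegral_supported supp (Mf := Rr * U) (Mg := `|Rr| * U)) => //.
- by apply: measurable_funM => //; exact: measurable_phi_sub.
- by apply: measurable_funM => //; exact: measurable_phi_sub.
- by move=> x /supported_norm_le xR; rewrite normrM ler_pM.
- by move=> x _; rewrite normrM ler_wpM2l.
- move=> x /supported_norm_le xR; rewrite ler_wpM2r ?phi_ge0//.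
  exact: le_trans (ler_norm x) xR.
Qed.

End output_density.

Section tilted_log_density.
Context {R : realType} (mu : probability R R) (Rr : R).
Hypothesis supp : supported mu Rr.

Definition tilted_log_fY v w := ln (fY mu v w) + (w + Rr) ^+ 2 / (2 * v).

Lemma fY_mulr v w k : 0 < v -> fY mu v w * k = \int[mu]_x (phi v (w - x) * k).
Proof.
move=> v0; rewrite /fY !(Rintegral_supported supp) ?[RHS]RintegralZr//.
- apply: (@integrable_supported _ mu Rr _ (Num.sqrt (2 * pi * v))^-1).
    exact: measurable_phi_sub.
  by move=> x _; rewrite ger0_norm ?phi_ge0 ?phi_le_peak.
- by apply: measurable_funM => //; exact: measurable_phi_sub.
- exact: measurable_phi_sub.
Qed.

Lemma tilted_log_fY_nondecreasing v : 0 < v -> {homo tilted_log_fY v : w w' / w <= w'}.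
Proof.
move=> v0 w w' ww'.
pose q u := (u + Rr) ^+ 2 / (2 * v).
pose U := (Num.sqrt (2 * pi * v))^-1.
have tiltedE u : tilted_log_fY v u = ln (\int[mu]_x (phi v (u - x) * expR (q u))).
  by rewrite -fY_mulr// lnM ?expRK// posrE ?expR_gt0 ?(fY_gt0 supp).
(* phi v (u - x) * expR (q u) = U * expR ((x + Rr) * (2 * u + Rr - x) / (2 * v)) *)
have tilted_phi_le x : - Rr <= x ->
    phi v (w - x) * expR (q w) <= phi v (w' - x) * expR (q w').
  move=> xR; rewrite /phi /q -!mulrA ![_^-1 * expR _]mulrC !mulrA -!expRD.
  rewrite ler_wpM2r ?invr_ge0 ?sqrtr_ge0// ler_expR -!mulrDl.
  by rewrite ler_pM2r ?invr_gt0 ?mulr_gt0//; nra.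
have tilted_phi_bounded u x : `|phi v (u - x) * expR (q u)| <= U * expR (q u).
  by rewrite ger0_norm ?mulr_ge0 ?phi_ge0 ?expR_ge0// ler_wpM2r ?expR_ge0 ?phi_le_peak.
rewrite !tiltedE ler_ln ?posrE -?fY_mulr ?mulr_gt0 ?expR_gt0 ?(fY_gt0 supp)//.
rewrite !fY_mulr//.
apply: (le_Rintegral_supported supp (Mf := U * expR (q w)) (Mg := U * expR (q w'))).
- by apply: measurable_funM => //; exact: measurable_phi_sub.
- by apply: measurable_funM => //; exact: measurable_phi_sub.
- by move=> x _; exact: tilted_phi_bounded.
- by move=> x _; exact: tilted_phi_bounded.
- move=> x /supported_norm_le; rewrite ler_norml => /andP[xR _].
  exact: tilted_phi_le.
Qed.

Lemma measurable_tilted_log_fY v (w : R) : 0 < v ->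
  measurable_fun setT (fun n : R => tilted_log_fY v (w + n)).
Proof.
move=> v0; apply: nondecreasing_measurable => // x y xy.
by apply: tilted_log_fY_nondecreasing => //; rewrite lerD2l.
Qed.

End tilted_log_density.

Lemma continuous_integrable_itv {R : realType} (f : R -> R) (a b : R) :
  continuous f -> lebesgue_measure.-integrable `[a, b] (EFin \o f).
Proof.
move=> cf; apply: continuous_compact_integrable; first exact: segment_compact.
exact: continuous_subspaceT.
Qed.

Section gaussian_second_moment.
Context {R : realType} (s : R).
Hypothesis s0 : 0 < s.
Local Notation lebesgue := (@lebesgue_measure R).

Lemma phi_normal_pdf : phi s = normal_pdf 0 (Num.sqrt s).
Proof.
rewrite normal_pdfE ?gt_eqF ?sqrtr_gt0//; apply/funext => x.
rewrite /phi /normal_peak /normal_fun subr0 sqr_sqrtr ?ltW// mulrC.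
by congr ((Num.sqrt _)^-1 * expR (_ / _)); ring.
Qed.

Lemma integral0y_phi : (\int[lebesgue]_(x in `[0%R, +oo[) (phi s x)%:E = (2^-1)%:E)%E.
Proof.
have := integral_normal_pdf 0 (Num.sqrt s); rewrite -phi_normal_pdf.
rewrite ge0_symfun_integralT; last 3 first.
- exact: phi_ge0.
- exact: continuous_phi.
- by move=> x /=; rewrite phiN.
rewrite -set_itvcy.
have : (0 <= \int[lebesgue]_(x in `[0%R, +oo[) (phi s x)%:E)%E.
  by apply: integral_ge0 => x _; rewrite lee_fin phi_ge0.
case: (\int[lebesgue]_(x in `[0%R, +oo[) _)%E => [r| |]//= r0; last first.
  by rewrite mulry gtr0_sg ?mul1e.
move=> /eqP; rewrite -EFinM eqe => /eqP r2.
by congr EFin; rewrite -[r](@mulKf _ 2) ?r2 ?mulr1 ?pnatr_eq0.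
Qed.

Lemma is_derive_id_mul_phi (x : R) :
  is_derive x 1 (fun y : R => y * phi s y) (phi s x - x ^+ 2 * phi s x / s).
Proof.
have dphi := is_derive_phi x s0.
have -> : (fun y : R => y * phi s y) = id * phi s by [].
apply: is_derive_eq; rewrite /GRing.scale /= mulr1.
by field; rewrite gt_eqF.
Qed.

Lemma continuous_sqr_mul_phi : continuous (fun x : R => x ^+ 2 * phi s x).
Proof. by move=> x; apply: cvgM; [exact: exprn_continuous | exact: continuous_phi]. Qed.

Lemma Rintegral_itv_sqr_phi_le b : 0 < b ->
  \int[lebesgue]_(x in `[0%R, b]) (x ^+ 2 * phi s x) <= s / 2.
Proof.
move=> b0.
have iphi := continuous_integrable_itv 0 b (@continuous_phi R s).
have isq := continuous_integrable_itv 0 b continuous_sqr_mul_phi.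
set F := fun y : R => y * phi s y.
set f := fun y : R => phi s y - y ^+ 2 * phi s y / s.
have cF : continuous F by move=> x; apply: cvgM; [exact: cvg_id | exact: continuous_phi].
have cf : continuous f.
  move=> x; apply: cvgB; first exact: continuous_phi.
  apply: cvgM; last exact: cvg_cst.
  exact: continuous_sqr_mul_phi.
have ftc : \int[lebesgue]_(x in `[0%R, b]) f x = F b.
  rewrite /Rintegral (continuous_FTC2 b0 (F := F)) /F ?mul0r ?sube0//.
  - exact: continuous_subspaceT.
  - split.
    + by move=> x _; have dF := is_derive_id_mul_phi x; exact: ex_derive.
    + exact/cvg_at_right_filter/cF.
    + exact/cvg_at_left_filter/cF.
  - by move=> x _; rewrite derive1E; have dF := is_derive_id_mul_phi x; exact: derive_val.
have fE : \int[lebesgue]_(x in `[0%R, b]) f x = \int[lebesgue]_(x in `[0%R, b]) phi s x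
    - (\int[lebesgue]_(x in `[0%R, b]) (x ^+ 2 * phi s x)) / s.
  rewrite /f RintegralB//; first by congr (_ - _); rewrite RintegralZr.
  apply: (@continuous_integrable_itv R _ 0 b) => x.
  apply: cvgM; last exact: cvg_cst.
  exact: continuous_sqr_mul_phi.
have phi_half : \int[lebesgue]_(x in `[0%R, b]) phi s x <= 2^-1.
  rewrite -lee_fin /Rintegral fineK ?integrable_fin_num// -integral0y_phi.
  apply: ge0_subset_integral => //; last exact: subset_itvl.
  - by apply/measurable_EFinP/measurable_funTS; exact: measurable_phi.
  - by move=> x _; rewrite lee_fin phi_ge0.
have Fb0 : 0 <= F b by rewrite /F mulr_ge0 ?phi_ge0 ?ltW.
have -> : \int[lebesgue]_(x in `[0%R, b]) (x ^+ 2 * phi s x)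
    = s * (\int[lebesgue]_(x in `[0%R, b]) phi s x - F b).
  by rewrite -ftc fE; field; rewrite gt_eqF.
by rewrite ler_pM2l// lerBlDr (le_trans phi_half)// lerDl.
Qed.

Lemma integral0y_sqr_phi_le :
  (\int[lebesgue]_(x in `[0%R, +oo[) (x ^+ 2 * phi s x)%:E <= (s / 2)%:E)%E.
Proof.
have f0 x : 0 <= x ^+ 2 * phi s x by rewrite mulr_ge0 ?sqr_ge0 ?phi_ge0.
have cvg_itv := ge0_cvgn_integral (mu := lebesgue) f0 (measurable_sqr_mul_phi s).
rewrite -(cvg_lim _ cvg_itv)//; apply: lime_le; first exact: cvgP cvg_itv.
near=> n; have n0 : (0 < n%:R :> R) by rewrite ltr0n; near: n; exists 1%N.
move: (Rintegral_itv_sqr_phi_le n0); rewrite -lee_fin /Rintegral fineK//.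
exact/integrable_fin_num/continuous_integrable_itv/continuous_sqr_mul_phi.
Unshelve. all: by end_near.
Qed.

Lemma integral_sqr_phi_le : (\int[lebesgue]_x (x ^+ 2 * phi s x)%:E <= s%:E)%E.
Proof.
rewrite ge0_symfun_integralT; last 3 first.
- by move=> x; rewrite mulr_ge0 ?sqr_ge0 ?phi_ge0.
- exact: continuous_sqr_mul_phi.
- by move=> x /=; rewrite phiN sqrrN.
rewrite -set_itvcy (@le_trans _ _ (2%:E * (s / 2)%:E)%E) ?lee_pmul2l ?integral0y_sqr_phi_le//.
by rewrite -EFinM mulrC -mulrA mulVf ?mulr1 ?pnatr_eq0.
Qed.

End gaussian_second_moment.

Section even_part_bound.
Context {R : realType}.
Local Notation lebesgue := (@lebesgue_measure R).

Lemma ge0_integral_comp_oppr (h : R -> \bar R) : measurable_fun setT h ->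
  (forall x, 0 <= h x)%E -> (\int[lebesgue]_x h (- x)%R = \int[lebesgue]_x h x)%E.
Proof.
move=> mh h0.
have mN : measurable_fun (setT : set (measurableTypeR R))
    (-%R : measurableTypeR R -> measurableTypeR R).
  exact: measurable_funN.
have := ge0_integral_pushforward mN lebesgue (D := setT) (f := h) measurableT mh
  (fun y _ => h0 y).
rewrite preimage_setT => <-.
by apply: eq_measure_integral => A mA _; exact: lebesgue_measureN.
Qed.

Lemma maxrN0 (x : R) : Num.max (- x) 0 = Num.max x 0 - x.
Proof.
have [x0|x0] := leP 0 x.
  by rewrite (max_idPr _) ?(max_idPl _) ?subrr// oppr_le0.
by rewrite (max_idPl _) ?(max_idPr _) ?sub0r// ?oppr_ge0 ltW.
Qed.

Lemma integral_funeneg_even_le (F g : R -> R) :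
  measurable_fun setT F -> measurable_fun setT g -> (forall x, 0 <= g x) ->
  (forall x, - g x <= F x + F (- x)) ->
  (\int[lebesgue]_x ((EFin \o F)^\-)%E x + \int[lebesgue]_x ((EFin \o F)^\-)%E x
   <= \int[lebesgue]_x ((EFin \o F)^\+)%E x + \int[lebesgue]_x ((EFin \o F)^\+)%E x
      + \int[lebesgue]_x (g x)%:E)%E.
Proof.
move=> mF mg g0 Fg; set Fe := EFin \o F.
have mFe : measurable_fun setT Fe by exact/measurable_EFinP.
have mFp := measurable_funepos mFe; have mFn := measurable_funeneg mFe.
have parts_le x : ((Fe^\-)%E x + (Fe^\-)%E (- x)%R
    <= (Fe^\+)%E x + (Fe^\+)%E (- x)%R + (g x)%:E)%E.
  rewrite !funeposE !funenegE /Fe /= -!EFin_max -!EFinD lee_fin !maxrN0.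
  by have := Fg x; lra.
have integral_even h : measurable_fun setT h -> (forall x, 0 <= h x)%E ->
    (\int[lebesgue]_x (h x + h (- x)%R) = \int[lebesgue]_x h x + \int[lebesgue]_x h x)%E.
  by move=> mh h0; rewrite ge0_integralD ?ge0_integral_comp_oppr//; exact: measurableT_comp.
rewrite -integral_even// -integral_even// -ge0_integralD//.
- apply: ge0_le_integral => //.
  + by move=> x _; rewrite adde_ge0.
  + by apply: emeasurable_funD => //; exact: measurableT_comp.
  + apply: emeasurable_funD; last exact/measurable_EFinP.
    by apply: emeasurable_funD => //; exact: measurableT_comp.
- by move=> x _; rewrite adde_ge0.
- by apply: emeasurable_funD => //; exact: measurableT_comp.
- by move=> x _; rewrite lee_fin.
- exact/measurable_EFinP.
Qed.

(* Only the negative part of F has to be integrated, so the bound also holds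
   when F is not integrable (its Rintegral is then 0 and c >= 0). *)
Lemma Rintegral_ge_even_part (F g : R -> R) (c : R) :
  measurable_fun setT F -> measurable_fun setT g -> (forall x, 0 <= g x) ->
  (\int[lebesgue]_x (g x)%:E <= c%:E)%E ->
  (forall x, - g x <= F x + F (- x)) ->
  - (c / 2) <= \int[lebesgue]_x F x.
Proof.
move=> mF mg g0 gc Fg.
have := integral_funeneg_even_le mF mg g0 Fg.
rewrite /Rintegral integralE; move: gc.
set G := (\int[lebesgue]_x (g x)%:E)%E.
set P := (\int[lebesgue]_x ((EFin \o F)^\+)%E x)%E.
set N := (\int[lebesgue]_x ((EFin \o F)^\-)%E x)%E.
have P0 : (0 <= P)%E by apply: integral_ge0 => x _; exact: funepos_ge0.
have N0 : (0 <= N)%E by apply: integral_ge0 => x _; exact: funeneg_ge0.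
have G0 : (0 <= G)%E by apply: integral_ge0 => x _; rewrite lee_fin.
clearbody P N G.
move: P N G P0 N0 G0 => [p| |] [n| |] [g'| |] //=; rewrite ?lee_fin.
- by move=> *; lra.
- by move=> _ _ g0' g'c _; rewrite oppr_le0 divr_ge0// (le_trans g0').
- by move=> _ _ g0' g'c _; rewrite oppr_le0 divr_ge0// (le_trans g0').
Qed.

End even_part_bound.

Section log_output_moment.
Context {R : realType} (mu : probability R R) (Rr : R).
Hypothesis supp : supported mu Rr.

Lemma Rintegral_mul_log_fY_ge v s w : 0 < v -> 0 < s -> 0 <= w + Rr ->
  - ((w + Rr) * s / v) <=
  \int[lebesgue_measure]_n (n * ln (fY mu v (w + n)) * phi s n).
Proof.
move=> v0 s0 a0; set a := w + Rr in a0 *.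
pose T n := tilted_log_fY mu Rr v (w + n).
pose q n := (w + n + Rr) ^+ 2 / (2 * v).
have lnE n : ln (fY mu v (w + n)) = T n - q n by rewrite /T /tilted_log_fY addrK.
have g0 n : 0 <= 2 * a / v * (n ^+ 2 * phi s n).
  by apply: mulr_ge0; [rewrite divr_ge0 ?mulr_ge0 // ltW | rewrite mulr_ge0 ?sqr_ge0 ?phi_ge0].
have -> : - (a * s / v) = - (2 * a / v * s / 2) by field; rewrite gt_eqF.
apply: Rintegral_ge_even_part g0 _ _.
- have -> : (fun n => n * ln (fY mu v (w + n)) * phi s n) =
      (fun n => n * (T n - q n) * phi s n).
    by apply/funext => n; rewrite lnE.
  apply: measurable_funM; last exact: measurable_phi.
  apply: measurable_funM => //; apply: measurable_funB.
    exact: measurable_tilted_log_fY.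
  apply: measurable_funM => //; apply: measurable_funX.
  by apply: measurable_funD => //; apply: measurable_funD.
- exact: measurable_funM (measurable_sqr_mul_phi s).
- under eq_integral do rewrite EFinM.
  rewrite [X in (_ <= X)%E]EFinM ge0_integralZl_EFin//.
  + apply: lee_wpmul2l; first by rewrite lee_fin divr_ge0 ?mulr_ge0// ltW.
    exact: integral_sqr_phi_le.
  + by move=> n _; rewrite lee_fin mulr_ge0 ?sqr_ge0 ?phi_ge0.
  + by apply/measurable_EFinP; exact: measurable_sqr_mul_phi.
  + by rewrite divr_ge0 ?mulr_ge0// ltW.
move=> n; rewrite !lnE phiN.
have Tn : 0 <= n * (T n - T (- n)).
  have [n0|n0] := leP 0 n.
    rewrite mulr_ge0// subr_ge0; apply: tilted_log_fY_nondecreasing => //.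
    by rewrite lerD2l (le_trans _ n0)// oppr_le0.
  rewrite nmulr_rge0// subr_le0; apply: tilted_log_fY_nondecreasing => //.
  by rewrite lerD2l lerNr ltW// (lt_le_trans n0)// oppr_ge0 ltW.
(* the tilts cancel up to [(w + n + Rr)^2 - (w - n + Rr)^2 = 4 a n] *)
have -> : n * (T n - q n) * phi s n + - n * (T (- n) - q (- n)) * phi s n
    = n * (T n - T (- n)) * phi s n - 2 * a / v * (n ^+ 2 * phi s n).
  by rewrite /q /a; field; rewrite gt_eqF.
by rewrite -[X in X <= _]add0r lerD2r mulr_ge0 ?phi_ge0.
Qed.

End log_output_moment.

Section complex_extension_on_reals.
Context {R : realType}.
Local Open Scope complex_scope.

Lemma cabs_real (a : R) : cabs a%:C = `|a|.
Proof. by rewrite /cabs /= expr0n addr0 sqrtr_sqr. Qed.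

Lemma expC_real (a : R) : expC a%:C = (expR a)%:C.
Proof. by rewrite /expC /= cos0 sin0 mulr1 mulr0. Qed.

Lemma phiC_real (v w : R) : phiC v w%:C = (phi v w)%:C.
Proof.
by rewrite /phiC -rmorphM -rmorphN -fmorph_div expC_real -fmorph_div /phi expr2.
Qed.

Lemma LogC_real (a : R) : 0 < a -> LogC a%:C = (ln a)%:C.
Proof.
move=> a0; rewrite /LogC /ArgC cabs_real /= gt_eqF//= lexx ger0_norm ?ltW//.
by rewrite divff ?gt_eqF// acos1.
Qed.

Lemma EC_real (mu : probability R R) (F : R -> R) :
  EC mu (fun x => (F x)%:C) = (\int[mu]_x F x)%:C.
Proof. by rewrite /EC /= /Rintegral integral0. Qed.

Lemma EN_real (v : R) (G : R -> R) :
  EN v (fun n => (G n)%:C) = (\int[lebesgue_measure]_n (G n * phi v n))%:C.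
Proof.
rewrite /EN /=.
have -> : (fun n : R => 0 * phi v n) = (fun=> 0) by apply/funext => n; rewrite mul0r.
by rewrite /Rintegral integral0.
Qed.

Lemma fYC_real (mu : probability R R) (v w : R) : fYC mu v w%:C = (fY mu v w)%:C.
Proof.
rewrite /fYC -EC_real; congr EC; apply/funext => x.
by rewrite -rmorphB phiC_real.
Qed.

Lemma hC_real (mu : probability R R) (Rr v1 v2 w : R) :
  supported mu Rr -> 0 < v2 ->
  hC mu v1 v2 w%:C =
  (v1 * fY mu v1 w * \int[lebesgue_measure]_n (n * ln (fY mu v2 (w + n)) * phi (v2 - v1) n)
     / (v2 - v1)
   - \int[mu]_x (x * phi v1 (w - x)) + w * fY mu v1 w)%:C.
Proof.
move=> supp v20; rewrite /hC fYC_real.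
have -> : (fun n : R => n%:C * LogC (fYC mu v2 (w%:C + n%:C))) =
    (fun n => (n * ln (fY mu v2 (w + n)))%:C).
  by apply/funext => n; rewrite -rmorphD fYC_real LogC_real ?rmorphM// (fY_gt0 supp).
have -> : (fun x : R => x%:C * phiC v1 (w%:C - x%:C)) = (fun x => (x * phi v1 (w - x))%:C).
  by apply/funext => x; rewrite -rmorphB phiC_real -rmorphM.
by rewrite EN_real EC_real !(rmorphM, rmorphB, rmorphD, fmorphV).
Qed.

End complex_extension_on_reals.

Lemma hC_real_ge {R : realType} (mu : probability R R) (Rr v1 v2 w : R) :
  supported mu Rr -> 0 < v1 -> v1 < v2 -> 0 <= w + Rr ->
  ((1 - v1 / v2) * w - (1 + v1 / v2) * Rr) * fY mu v1 w <= cabs (hC mu v1 v2 w%:C%C).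
Proof.
move=> supp v10 v12 wR; have v20 := lt_trans v10 v12.
have s0 : 0 < v2 - v1 by rewrite subr_gt0.
rewrite (hC_real _ _ supp v20) cabs_real; apply: le_trans (ler_norm _).
have F0 : 0 <= fY mu v1 w by exact/ltW/(fY_gt0 supp).
have := Rintegral_mul_phi_le supp w v10.
have := Rintegral_mul_log_fY_ge supp v20 s0 wR.
set F := fY mu v1 w; set J := \int[_]_n _; set G := \int[mu]_x _ => hJ hG.
have hJ' : - (v1 * (w + Rr) / v2) <= v1 * J / (v2 - v1).
  have -> : - (v1 * (w + Rr) / v2) = v1 * - ((w + Rr) * (v2 - v1) / v2) / (v2 - v1).
    by field; rewrite !gt_eqF.
  by rewrite ler_pM2r ?invr_gt0// ler_pM2l.
have -> : v1 * F * J / (v2 - v1) - G + w * F = F * (v1 * J / (v2 - v1) + w) - G.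
  by field; rewrite gt_eqF.
have -> : ((1 - v1 / v2) * w - (1 + v1 / v2) * Rr) * F
    = F * (- (v1 * (w + Rr) / v2) + w) - Rr * F.
  by field; rewrite gt_eqF.
by rewrite lerB// ler_wpM2l// lerD2r.
Qed.

Theorem lemma9 (R : realType) (Rr v1 v2 : R) (mu : probability R R) :
  0 < Rr -> 0 < v1 -> v1 < v2 ->
  secrecy_maximizer mu v1 v2 Rr ->
  forall B : R, Rr * (v2 + v1) / (v2 - v1) <= B ->
  exists z : R[i], cabs z <= B /\
    ((1 - v1 / v2) * B - (1 + v1 / v2) * Rr)
      * (expR (- ((B + Rr) ^+ 2) / (2 * v1)) / Num.sqrt (2 * pi * v1))
    <= cabs (hC mu v1 v2 z).
Proof.
move=> Rr0 v10 v12 [supp _] B hB.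
have v20 := lt_trans v10 v12.
have B0 : 0 <= B.
  apply: le_trans hB; apply/ltW/divr_gt0; last by rewrite subr_gt0.
  by rewrite mulr_gt0// addr_gt0.
have K0 : 0 <= (1 - v1 / v2) * B - (1 + v1 / v2) * Rr.
  rewrite ler_pdivrMr ?subr_gt0// in hB.
  have -> : (1 - v1 / v2) * B - (1 + v1 / v2) * Rr = ((v2 - v1) * B - (v2 + v1) * Rr) / v2.
    by field; rewrite gt_eqF.
  by apply: divr_ge0 (ltW v20); rewrite subr_ge0; nra.
exists B%:C%C; split; first by rewrite cabs_real ger0_norm.
apply: le_trans (hC_real_ge supp v10 v12 _); last exact: addr_ge0 B0 (ltW Rr0).
rewrite ler_wpM2l//; have := fY_ge_phi supp B v10.
by rewrite ger0_norm.
Qed.
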